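(* Let $(\mathscr C,A,\psi)$ be an entwining structure with $A$ finite dimensional over $K$, and suppose there exists a normalized cointegral $\gamma=\{\gamma_X:A^*\otimes\mathscr C(X,X)\to A\}_{X\in Ob(\mathscr C)}$ on $(\mathscr C,A,\psi)$. Then (a) the forgetful functor $G_\psi:Com^{\mathscr C}_A(\psi)\to Com^{\mathscr C}$ is a semisimple functor, and (b) $G_\psi$ is a Maschke functor.
   Context: $K$ is a field. A $K$-coalgebra with several objects $\mathscr C$: a set $Ob(\mathscr C)$, vector spaces $\mathscr C(X,Y)$, linear comultiplications $\delta_{XYZ}:\mathscr C(X,Z)\to\mathscr C(Y,Z)\otimes\mathscr C(X,Y)$ and counits $\epsilon_X:\mathscr C(X,X)\to K$, with $(\delta_{YWZ}\otimes\mathrm{id})\delta_{XYZ}=(\mathrm{id}\otimes\delta_{XYW})\delta_{XWZ}$ and $(\epsilon_Y\otimes\mathrm{id})\delta_{XYY}=\mathrm{id}=(\mathrm{id}\otimes\epsilon_X)\delta_{XXY}$. For a $K$-algebra $A$ (multiplication $\mu_A$, unit $u_A$), an entwining structure $(\mathscr C,A,\psi)$ is a family of linear maps $\psi_{XY}:\mathscr C(X,Y)\otimes A\to A\otimes\mathscr C(X,Y)$, $\psi_{XY}(f\otimes a)=a_\psi\otimes f^\psi$, with (i) $(\mathrm{id}_A\otimes\delta_{XYZ})\psi_{XZ}=(\psi_{YZ}\otimes\mathrm{id})(\mathrm{id}\otimes\psi_{XY})(\delta_{XYZ}\otimes\mathrm{id}_A)$; (ii) $\psi_{XZ}(\mathrm{id}\otimes\mu_A)=(\mu_A\otimes\mathrm{id})(\mathrm{id}_A\otimes\psi_{XZ})(\psi_{XZ}\otimes\mathrm{id}_A)$;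 (iii) $\psi_{XZ}(f\otimes1)=1\otimes f$; (iv) $\epsilon_Z(g^\psi)a_\psi=\epsilon_Z(g)a$. $Com^{\mathscr C}$: right $\mathscr C$-comodules (spaces $\mathcal M(X)$, coactions $\rho_{XY}(m)=m_{Y0}\otimes m_{Y1}\in\mathcal M(Y)\otimes\mathscr C(X,Y)$ with $(\rho_{ZY}\otimes\mathrm{id})\rho_{XZ}=(\mathrm{id}\otimes\delta_{XZY})\rho_{XY}$, $(\mathrm{id}\otimes\epsilon_X)\rho_{XX}=\mathrm{id}$) with coaction-compatible morphisms; abelian with exactness objectwise. $Com^{\mathscr C}_A(\psi)$: comodules with right $A$-module structures on each $\mathcal M(X)$ such that $\rho_{XY}(ma)=m_{Y0}a_\psi\otimes(m_{Y1})^\psi$, with $A$-linear comodule morphisms; $G_\psi$ forgets the $A$-actions. $coev_A:K\to A\otimes A^*$, $1\mapsto\sum_ia_i\otimes a_i^*$ (basis and dual basis). A normalized cointegral is a family of linear maps $\gamma_X:A^*\otimes\mathscr C(X,X)\to A$ with: (1) $(\mathrm{id}_A\otimes\psi_{XY})(\psi_{XY}\otimes\gamma_X)(\mathrm{id}\otimes coev_A\otimes\mathrm{id})\delta_{XXY}=(\mathrm{id}_A\otimes\gamma_Y\otimes\mathrm{id})(coev_A\otimes\delta_{XYY})$ as maps $\mathscr C(X,Y)\to A\otimes A\otimes\mathscr C(X,Y)$; (2) $(\mathrm{id}_A\otimes\mu_A)(\mathrm{id}_A\otimes\gamma_X\otimes\mathrm{id}_A)(coev_A\otimes\mathrm{id}\otimes\mathrm{id}_A)=(\mu_A\otimes\gamma_X)(\mathrm{id}_A\otimes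 coev_A\otimes\mathrm{id})\psi_{XX}$ as maps $\mathscr C(X,X)\otimes A\to A\otimes A$; (3) $\mu_A(\mathrm{id}_A\otimes\gamma_X)(coev_A\otimes\mathrm{id})=u_A\circ\epsilon_X$ on $\mathscr C(X,X)$. A functor $F:\mathcal D\to\mathcal D'$ between abelian categories is semisimple if every short exact sequence in $\mathcal D$ whose image under $F$ is split exact in $\mathcal D'$ splits in $\mathcal D$; it is Maschke if for all morphisms $i:X\to X'$, $f:X\to Y$ in $\mathcal D$ with $F(i)$ a split monomorphism in $\mathcal D'$ there is $g:X'\to Y$ with $g\circ i=f$. *)

From HB Require Import structures.
From mathcomp Require Import all_boot all_algebra falgebra.
Set Implicit Arguments. Unset Strict Implicit. Unset Printing Implicit Defensive.
Import GRing.Theory.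
Local Open Scope ring_scope.

(* MathComp has no tensor product of (possibly infinite dimensional)        *)
(* vector spaces.  An element of V (x) W is represented by a finite formal  *)
(* sum  sum_i v_i (x) w_i, i.e. a list of pairs; two formal sums represent  *)
(* the same tensor iff they agree under every pairing  phi (x) chi  with    *)
(* linear functionals phi, chi (over a field, the functionals phi (x) chi   *)
(* separate the points of V (x) W).  Same for triple tensor products.       *)
(* A linear map into a tensor product is a function into formal sums which  *)
(* is linear modulo this equivalence; a linear map out of a tensor product  *)
(* is a multilinear map (universal property).                               *)
Section Tensor.
Variable K : fieldType.

Definition tens (V W : lmodType K) := seq (V * W).
Definition tens3 (U V W : lmodType K) := seq (U * V * W).

Definition teq (V W : lmodType K) (s t : tens V W) : Prop :=
  forall (phi : {linear V -> K^o}) (chi : {linear W -> K^o}),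
    \sum_(p <- s) (phi p.1 : K) * chi p.2 = \sum_(p <- t) (phi p.1 : K) * chi p.2.

Definition teq3 (U V W : lmodType K) (s t : tens3 U V W) : Prop :=
  forall (phi : {linear U -> K^o}) (chi : {linear V -> K^o})
         (om : {linear W -> K^o}),
    \sum_(p <- s) (phi p.1.1 : K) * chi p.1.2 * om p.2
    = \sum_(p <- t) (phi p.1.1 : K) * chi p.1.2 * om p.2.

(* scalar multiple of a formal sum; addition is concatenation *)
Definition tscale (V W : lmodType K) (k : K) (s : tens V W) : tens V W :=
  [seq (k *: p.1, p.2) | p <- s].

Definition tlinear (U V W : lmodType K) (f : U -> tens V W) : Prop :=
  forall k u u', teq (f (k *: u + u')) (tscale k (f u) ++ f u').

(* f : U -> V -> W (x) Z is bilinear, i.e. a linear map U (x) V -> W (x) Z *)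
Definition tbilinear (U V W Z : lmodType K) (f : U -> V -> tens W Z) : Prop :=
  (forall v k u u', teq (f (k *: u + u') v) (tscale k (f u v) ++ f u' v)) /\
  (forall u k v v', teq (f u (k *: v + v')) (tscale k (f u v) ++ f u v')).

Definition plinear (U V : lmodType K) (f : U -> V) : Prop :=
  forall k u u', f (k *: u + u') = k *: f u + f u'.

End Tensor.

Section Coalgebra.
Local Unset Implicit Arguments.
Variables (K : fieldType) (I : Type) (C : I -> I -> lmodType K).
Variable delta : forall X Y Z, C X Z -> tens (C Y Z) (C X Y).
Variable eps : forall X, {linear C X X -> K^o}.

Definition is_coalgebra : Prop :=
  (forall X Y Z, tlinear (delta X Y Z)) /\
  (* (delta_YWZ (x) id) delta_XYZ = (id (x) delta_XYW) delta_XWZ *)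
  (forall X Y W Z (f : C X Z),
     teq3 [seq (q.1, q.2, p.2) | p <- delta X Y Z f, q <- delta Y W Z p.1]
          [seq (p.1, q.1, q.2) | p <- delta X W Z f, q <- delta X Y W p.2]) /\
  (forall X Y (f : C X Y), \sum_(p <- delta X Y Y f) (eps Y p.1 : K) *: p.2 = f) /\
  (forall X Y (f : C X Y), \sum_(p <- delta X X Y f) (eps X p.2 : K) *: p.1 = f).

(* Entwining structures (C, A, psi), psi_XY : C(X,Y) (x) A -> A (x) C(X,Y). *)
Variable A : falgType K.
Variable psi : forall X Y, C X Y -> A -> tens A (C X Y).

Definition is_entwining : Prop :=
  (forall X Y, tbilinear (psi X Y)) /\
  (forall X Y Z (f : C X Z) (a : A),
     teq3 [seq (p.1, q.1, q.2) | p <- psi X Z f a, q <- delta X Y Z p.2]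
          (flatten [seq [seq (r.1, r.2, q.2) | q <- psi X Y p.2 a,
                                                   r <- psi Y Z p.1 q.1]
                     | p <- delta X Y Z f])) /\
  (forall X Z (f : C X Z) (a b : A),
     teq (psi X Z f (a * b))
         [seq (p.1 * q.1, q.2) | p <- psi X Z f a, q <- psi X Z p.2 b]) /\
  (forall X Z (f : C X Z), teq (psi X Z f 1) [:: (1, f)]) /\
  (forall Z (g : C Z Z) (a : A),
     \sum_(p <- psi Z Z g a) (eps Z p.2 : K) *: p.1 = (eps Z g : K) *: a).

(* coev_A : K -> A (x) A^*,  1 |-> sum_i a_i (x) a_i^*  (A^* = 'Hom(A, K))   *)
Definition dimA := \dim (fullv : {vspace A}).
Definition abas (i : 'I_dimA) : A := (vbasis (fullv : {vspace A}))`_i.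
Definition adual (i : 'I_dimA) : 'Hom(A, K^o) :=
  linfun (coord (vbasis (fullv : {vspace A})) i : A -> K^o).

(* normalized cointegral gamma_X : A^* (x) C(X,X) -> A, given as bilinear maps *)
Definition is_normalized_cointegral
    (gamma : forall X, 'Hom(A, K^o) -> C X X -> A) : Prop :=
  (forall X (f : C X X), plinear (fun phi => gamma X phi f)) /\
  (forall X (phi : 'Hom(A, K^o)), plinear (gamma X phi)) /\
  (* (1) : maps C(X,Y) -> A (x) A (x) C(X,Y) *)
  (forall X Y (f : C X Y),
     teq3 (flatten [seq flatten
                     [seq [seq (q.1, r.1, r.2) | q <- psi X Y p.1 (abas i),
                             r <- psi X Y q.2 (gamma X (adual i) p.2)]
                     | i <- enum 'I_dimA] | p <- delta X X Y f])
          [seq (abas i, gamma Y (adual i) p.1, p.2) | i <- enum 'I_dimA,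
                                                      p <- delta X Y Y f]) /\
  (* (2) : maps C(X,X) (x) A -> A (x) A *)
  (forall X (f : C X X) (a : A),
     teq [seq (abas i, gamma X (adual i) f * a) | i <- enum 'I_dimA]
         [seq (p.1 * abas i, gamma X (adual i) p.2) | p <- psi X X f a,
                                                      i <- enum 'I_dimA]) /\
  (forall X (f : C X X),
     \sum_(i < dimA) abas i * gamma X (adual i) f = (eps X f : K) *: 1).

Record comod := Comod {
  cm_sp :> I -> lmodType K;
  cm_rho : forall X Y, cm_sp X -> tens (cm_sp Y) (C X Y);
  cm_rho_lin : forall X Y, tlinear (cm_rho X Y);
  cm_rho_coassoc : forall X Z Y (m : cm_sp X),
    teq3 [seq (q.1, q.2, p.2) | p <- cm_rho X Z m, q <- cm_rho Z Y p.1]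
         [seq (p.1, q.1, q.2) | p <- cm_rho X Y m, q <- delta X Z Y p.2];
  cm_rho_counit : forall X (m : cm_sp X),
    \sum_(p <- cm_rho X X m) (eps X p.2 : K) *: p.1 = m
}.

Definition comod_hom (M N : comod) (h : forall X, M X -> N X) : Prop :=
  (forall X, plinear (h X)) /\
  (forall X Y (m : M X),
     teq (cm_rho N X Y (h X m)) [seq (h Y p.1, p.2) | p <- cm_rho M X Y m]).

Record emod := EMod {
  em_cm :> comod;
  em_act : forall X, em_cm X -> A -> em_cm X;
  em_act_linl : forall X (a : A), plinear (fun m : em_cm X => em_act X m a);
  em_act_linr : forall X (m : em_cm X), plinear (fun a : A => em_act X m a);
  em_act1 : forall X (m : em_cm X), em_act X m 1 = m;
  em_actM : forall X (m : em_cm X) (a b : A), em_act X (em_act X m a) b = em_act X m (a * b);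
  em_compat : forall X Y (m : em_cm X) (a : A),
    teq (cm_rho em_cm X Y (em_act X m a))
        [seq (em_act Y p.1 q.1, q.2) | p <- cm_rho em_cm X Y m, q <- psi X Y p.2 a]
}.

Definition emod_hom (M N : emod) (h : forall X, M X -> N X) : Prop :=
  comod_hom M N h /\ (forall X (m : M X) (a : A), h X (em_act M X m a) = em_act N X (h X m) a).

Definition short_exact (M1 M2 M3 : comod)
    (f : forall X, M1 X -> M2 X) (g : forall X, M2 X -> M3 X) : Prop :=
  forall X, injective (f X) /\ (forall n : M3 X, exists m, g X m = n) /\
    (forall n : M2 X, g X n = 0 <-> exists m, f X m = n).

(* G_psi is semisimple: a short exact sequence in Com^C_A(psi) which splits
   in Com^C (as a sequence of comodules) splits in Com^C_A(psi). *)
Definition Gpsi_semisimple : Prop :=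
  forall (M1 M2 M3 : emod) (f : forall X, M1 X -> M2 X) (g : forall X, M2 X -> M3 X),
    emod_hom M1 M2 f -> emod_hom M2 M3 g -> short_exact M1 M2 M3 f g ->
    (exists r : forall X, M2 X -> M1 X,
        comod_hom M2 M1 r /\ forall X (m : M1 X), r X (f X m) = m) ->
    exists r : forall X, M2 X -> M1 X,
        emod_hom M2 M1 r /\ forall X (m : M1 X), r X (f X m) = m.

Definition Gpsi_Maschke : Prop :=
  forall (M M' N : emod) (i : forall X, M X -> M' X) (f : forall X, M X -> N X),
    emod_hom M M' i -> emod_hom M N f ->
    (exists r : forall X, M' X -> M X,
        comod_hom M' M r /\ forall X (m : M X), r X (i X m) = m) ->
    exists g : forall X, M' X -> N X,
        emod_hom M' N g /\ forall X (m : M X), g X (i X m) = f X m.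

End Coalgebra.

From HB Require Import structures.
From mathcomp Require Import all_boot all_algebra falgebra.
From mathcomp Require Import boolp classical_sets.
Set Implicit Arguments. Unset Strict Implicit. Unset Printing Implicit Defensive.
Import GRing.Theory.
Local Open Scope ring_scope.

(* Let [i : M -> M'] be a morphism of entwined modules with a
   comodule retraction [r].  Averaging [r] with the cointegral gives
     r~(m) = sum_j r(m_0 a_j) gamma(a_j^*, m_1),
   where [a_j], [a_j^*] are dual bases of [A].  Axiom (3) together with the
   counit shows [r~ i = id], axiom (2) shows that [r~] is [A]-linear, and
   axiom (1) together with coassociativity of [M'] shows that [r~] is a
   comodule map.  So [r~] splits [i] in [Com^C_A(psi)], which gives
   semisimplicity, and [f r~] extends any [f] along [i], which is the Maschke
   property.  Formal tensors are compared through test functionals, which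
   separate points by Zorn's lemma; every identity of formal tensors can thus
   be pushed through multilinear maps. *)

Section PLinear.
Variable K : fieldType.
Implicit Types U V W Z : lmodType K.

Definition linear_of_plinear U V (f : U -> V) (H : plinear f) : {linear U -> V} :=
  HB.pack f (GRing.isLinear.Build K U V *:%R f H).

Lemma plinearZ U V (f : U -> V) : plinear f -> forall k x, f (k *: x) = k *: f x.
Proof. by move=> H k x; exact: linearZ_LR (linear_of_plinear H) k x. Qed.

Lemma plinear_sum U V (f : U -> V) J (r : seq J) (P : pred J) (F : J -> U) :
  plinear f -> f (\sum_(j <- r | P j) F j) = \sum_(j <- r | P j) f (F j).
Proof. by move=> H; exact: (raddf_sum (linear_of_plinear H) r P F). Qed.

Lemma plinear_sumZ U V (f : U -> V) J (r : seq J) (c : J -> K) (F : J -> U) :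
  plinear f -> f (\sum_(j <- r) c j *: F j) = \sum_(j <- r) c j *: f (F j).
Proof. by move=> H; rewrite plinear_sum //; apply: eq_bigr => j _; rewrite plinearZ. Qed.

Lemma plinear_comp U V W (f : U -> V) (g : V -> W) :
  plinear f -> plinear g -> plinear (fun x => g (f x)).
Proof. by move=> Hf Hg k x y; rewrite Hf Hg. Qed.

Lemma plinear_sumf U V J (r : seq J) (F : J -> U -> V) :
  (forall j, plinear (F j)) -> plinear (fun x => \sum_(j <- r) F j x).
Proof.
by move=> HF k x y; rewrite scaler_sumr -big_split; apply: eq_bigr => j _; rewrite HF.
Qed.

Lemma plinear_linear U (phi : {linear U -> K^o}) : plinear (phi : U -> K^o).
Proof. by move=> k x y; rewrite linearP. Qed.

Lemma plinear_mulr U (f : U -> K^o) (c : K) :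
  plinear f -> plinear (fun x => (f x * c : K^o)).
Proof. by move=> H k x y; rewrite H /= mulrDl -mulrA. Qed.

Lemma plinear_mull U (f : U -> K^o) (c : K) :
  plinear f -> plinear (fun x => (c * f x : K^o)).
Proof. by move=> H k x y; rewrite H /= mulrDr mulrCA. Qed.

Definition pbilinear U V W (B : U -> V -> W) :=
  (forall v, plinear (fun u => B u v)) /\ (forall u, plinear (B u)).

Definition ptrilinear U V W Z (B : U -> V -> W -> Z) :=
  [/\ forall v w, plinear (fun u => B u v w), forall u w, plinear (fun v => B u v w)
    & forall u v, plinear (B u v)].

Lemma pbilinear_mul U V (f : U -> K^o) (g : V -> K^o) :
  plinear f -> plinear g -> pbilinear (fun x y => (f x * g y : K^o)).
Proof. by move=> Hf Hg; split=> [y|x]; [apply: plinear_mulr | apply: plinear_mull]. Qed.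

End PLinear.

Section LinearFunctionals.
Local Open Scope classical_set_scope.
Variables (K : fieldType) (V : lmodType K).

Definition subspace (W : set V) := forall k u u', W u -> W u' -> W (k *: u + u').

Lemma subspace0 (W : set V) u : subspace W -> W u -> W 0.
Proof. by move=> sW Wu; have := sW (-1) u u Wu Wu; rewrite scaleN1r addNr. Qed.

Lemma subspaceN (W : set V) u : subspace W -> W u -> W (- u).
Proof.
by move=> sW Wu; have := sW (-1) u 0 Wu (subspace0 sW Wu); rewrite scaleN1r addr0.
Qed.

Lemma maximal_subspace_avoiding (v : V) : v != 0 ->
  exists W : set V, [/\ subspace W, W 0, ~ W v &
    forall B, W `<` B -> subspace B -> B v].
Proof.
move=> v0; pose P W := subspace W /\ ~ W v.
have [W [[sW nWv] Wmax]] : exists W, P W /\ forall B, W `<` B -> ~ P B.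
  apply: Zorn_bigcup => F FP Ftot; split; last by move=> [X FX Xv]; exact: (FP X FX).2.
  move=> k u u' [X FX Xu] [Y FY Yu'].
  have [XY|YX] := Ftot X Y FX FY.
    by exists Y => //; apply: (FP Y FY).1 => //; exact: XY.
  by exists X => //; apply: (FP X FX).1 => //; exact: YX.
have Bv B : W `<` B -> subspace B -> B v.
  by move=> WB sB; apply: contrapT => nBv; exact: Wmax B WB (conj sB nBv).
exists W; split => //.
have [[u Wu]|W_empty] := pselect (exists u, W u); first exact: subspace0 Wu.
have : [set 0] v.
  apply: Bv; last by move=> k u u' /= -> ->; rewrite scaler0 addr0.
  by split=> [u Wu|/(_ 0 erefl) W0]; case: W_empty; [exists u | exists 0].
by move=> /= /eqP; rewrite (negbTE v0).
Qed.

Lemma maximal_subspace_avoiding_spans (v : V) (W : set V) :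
  subspace W -> W 0 -> ~ W v -> (forall B, W `<` B -> subspace B -> B v) ->
  forall x, exists w c, W w /\ x = w + c *: v.
Proof.
move=> sW W0 nWv Wmax x; apply: contrapT => nx.
pose B := [set y | exists w c, W w /\ y = w + c *: x].
have sB : subspace B.
  move=> k _ _ [w [c [Ww ->]]] [w' [c' [Ww' ->]]].
  exists (k *: w + w'), (k * c + c'); split; first exact: sW.
  by rewrite scalerDr scalerDl scalerA addrACA.
have xB : B x by exists 0, 1; rewrite scale1r add0r.
have nWx : ~ W x by move=> Wx; apply: nx; exists x, 0; rewrite scale0r addr0.
have WB : W `<` B.
  by split=> [w Ww|/(_ x xB) //]; exists w, 0; rewrite scale0r addr0.
have [w [c [Ww vE]]] := Wmax B WB sB.
have [c0|c0] := eqVneq c 0; first by apply: nWv; rewrite vE c0 scale0r addr0.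
apply: nx; exists ((- c^-1) *: w + 0), c^-1; split; first exact: sW.
by rewrite addr0 vE scalerDr scalerA mulVf // scale1r scaleNr addrA addNr add0r.
Qed.

(* The coefficient of [v] along a hyperplane avoiding [v] is the functional. *)
Lemma exists_functional_eq1 (v : V) : v != 0 ->
  exists phi : {linear V -> K^o}, phi v = 1.
Proof.
move=> /maximal_subspace_avoiding [W [sW W0 nWv Wmax]].
have dec := maximal_subspace_avoiding_spans sW W0 nWv Wmax.
have [f fP] : {f : V -> K & forall x, exists w, W w /\ x = w + f x *: v}.
  apply: (@choice _ _ (fun x c => exists w, W w /\ x = w + c *: v)) => x.
  by have [w [c Ex]] := dec x; exists c, w.
have coefE x w c : W w -> x = w + c *: v -> f x = c.
  move=> Ww xE; have [w' [Ww' xfE]] := fP x.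
  apply: contrapT => /eqP ne; apply: nWv.
  have E : (f x - c) *: v = w - w'.
    rewrite scalerBl.
    have -> : f x *: v = x - w' by rewrite [in RHS]xfE addrAC subrr add0r.
    have -> : c *: v = x - w by rewrite [in RHS]xE addrAC subrr add0r.
    by rewrite opprB addrC addrA subrK.
  have Wd : W (w - w') by have := sW 1 _ _ Ww (subspaceN sW Ww'); rewrite scale1r.
  have := sW ((f x - c)^-1) _ _ Wd W0.
  by rewrite addr0 -E scalerA mulVf ?subr_eq0 // scale1r.
have f_linear : plinear (f : V -> K^o).
  move=> k x y; have [w1 [W1 E1]] := fP x; have [w2 [W2 E2]] := fP y.
  apply: (coefE _ (k *: w1 + w2)); first exact: sW.
  rewrite [in LHS]E1 [in LHS]E2 scalerDr scalerA.
  by rewrite [_ + _ in RHS]/= scalerDl addrACA.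
exists (linear_of_plinear f_linear) => /=.
by apply: (coefE v 0) => //; rewrite add0r scale1r.
Qed.

(* A Gram-Schmidt step: a nonzero residual [v - P v] is added with a functional
   equal to 1 on it, and the old vectors are corrected by that functional. *)
Lemma finite_coordinates (vs : seq V) : exists L : seq ({linear V -> K^o} * V),
  forall v, v \in vs -> v = \sum_(q <- L) (q.1 v : K) *: q.2.
Proof.
elim: vs => [|v vs [L HL]]; first by exists [::].
pose P u := \sum_(q <- L) (q.1 u : K) *: q.2.
have [v0|v0] := eqVneq (v - P v) 0.
  exists L => u; rewrite inE => /orP[/eqP ->|/HL //].
  by apply/eqP; rewrite -subr_eq0 v0.
have [phi phi1] := exists_functional_eq1 v0.
pose L' := (phi, v - P v) :: [seq (q.1, q.2 - (phi q.2 : K) *: (v - P v)) | q <- L].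
have L'E u : \sum_(q <- L') (q.1 u : K) *: q.2 = P u + (phi (u - P u) : K) *: (v - P v).
  rewrite big_cons big_map /=.
  under eq_bigr do rewrite scalerDr scalerN scalerA.
  rewrite big_split /= sumrN -scaler_suml.
  have -> : \sum_(q <- L) ((q.1 u : K) * phi q.2) = phi (P u).
    by rewrite /P linear_sum; apply: eq_bigr => q _; rewrite linearZ.
  have -> : (phi (u - P u) : K) = phi u - phi (P u) by rewrite linearB.
  by rewrite scalerBl addrCA addrA.
exists L' => u; rewrite inE L'E => /orP[/eqP ->|/HL uE].
  by rewrite phi1 scale1r addrC subrK.
by rewrite /P -uE subrr linear0 scale0r addr0.
Qed.

End LinearFunctionals.

Section TensorTransport.
Variable K : fieldType.
Implicit Types U V W Z : lmodType K.

Lemma pbilinear_sum_expand V W U (s : tens V W) (B : V -> W -> U)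
    (L1 : seq ({linear V -> K^o} * V)) (L2 : seq ({linear W -> K^o} * W)) :
  pbilinear B ->
  (forall p, p \in s -> p.1 = \sum_(q <- L1) (q.1 p.1 : K) *: q.2) ->
  (forall p, p \in s -> p.2 = \sum_(q <- L2) (q.1 p.2 : K) *: q.2) ->
  \sum_(p <- s) B p.1 p.2 = \sum_(q1 <- L1) \sum_(q2 <- L2)
     (\sum_(p <- s) (q1.1 p.1 : K) * q2.1 p.2) *: B q1.2 q2.2.
Proof.
move=> [B1 B2] H1 H2.
rewrite (eq_big_seq (fun p => \sum_(q1 <- L1) \sum_(q2 <- L2)
     ((q1.1 p.1 : K) * q2.1 p.2) *: B q1.2 q2.2)); last first.
  move=> p /[dup] /H1 {1}-> /H2 {1}->.
  rewrite (plinear_sumZ _ _ _ (B1 _)); apply: eq_bigr => q1 _.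
  rewrite (plinear_sumZ _ _ _ (B2 _)) scaler_sumr; apply: eq_bigr => q2 _.
  by rewrite scalerA.
rewrite exchange_big; apply: eq_bigr => q1 _.
by rewrite exchange_big; apply: eq_bigr => q2 _; rewrite scaler_suml.
Qed.

Lemma ptrilinear_sum_expand V W Z U (s : tens3 V W Z) (B : V -> W -> Z -> U)
    (L1 : seq ({linear V -> K^o} * V)) (L2 : seq ({linear W -> K^o} * W))
    (L3 : seq ({linear Z -> K^o} * Z)) :
  ptrilinear B ->
  (forall p, p \in s -> p.1.1 = \sum_(q <- L1) (q.1 p.1.1 : K) *: q.2) ->
  (forall p, p \in s -> p.1.2 = \sum_(q <- L2) (q.1 p.1.2 : K) *: q.2) ->
  (forall p, p \in s -> p.2 = \sum_(q <- L3) (q.1 p.2 : K) *: q.2) ->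
  \sum_(p <- s) B p.1.1 p.1.2 p.2 = \sum_(q1 <- L1) \sum_(q2 <- L2) \sum_(q3 <- L3)
     (\sum_(p <- s) (q1.1 p.1.1 : K) * q2.1 p.1.2 * q3.1 p.2) *: B q1.2 q2.2 q3.2.
Proof.
move=> [B1 B2 B3] H1 H2 H3.
rewrite (eq_big_seq (fun p => \sum_(q1 <- L1) \sum_(q2 <- L2) \sum_(q3 <- L3)
     ((q1.1 p.1.1 : K) * q2.1 p.1.2 * q3.1 p.2) *: B q1.2 q2.2 q3.2)); last first.
  move=> p /[dup] /H1 {1}-> /[dup] /H2 {1}-> /H3 {1}->.
  rewrite (plinear_sumZ _ _ _ (B1 _ _)); apply: eq_bigr => q1 _.
  rewrite (plinear_sumZ _ _ _ (B2 _ _)) scaler_sumr; apply: eq_bigr => q2 _.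
  rewrite (plinear_sumZ _ _ _ (B3 _ _)) !scaler_sumr; apply: eq_bigr => q3 _.
  by rewrite !scalerA.
rewrite exchange_big; apply: eq_bigr => q1 _.
rewrite exchange_big; apply: eq_bigr => q2 _.
by rewrite exchange_big; apply: eq_bigr => q3 _; rewrite scaler_suml.
Qed.

(* Functionals separate points, so a bilinear map only sees finitely many
   coordinates of the vectors involved, and these are what [teq] compares. *)
Lemma teq_pbilinear_sum V W U (s t : tens V W) (B : V -> W -> U) :
  pbilinear B -> teq s t -> \sum_(p <- s) B p.1 p.2 = \sum_(p <- t) B p.1 p.2.
Proof.
move=> HB st.
have [L1 H1] := finite_coordinates (map fst (s ++ t)).
have [L2 H2] := finite_coordinates (map snd (s ++ t)).
have in_s p : p \in s -> p \in s ++ t by rewrite mem_cat => ->.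
have in_t p : p \in t -> p \in s ++ t by rewrite mem_cat orbC => ->.
rewrite (pbilinear_sum_expand (L1 := L1) (L2 := L2) HB); first last.
- by move=> p /in_s Hp; apply/H2/map_f.
- by move=> p /in_s Hp; apply/H1/map_f.
rewrite (pbilinear_sum_expand (s := t) (L1 := L1) (L2 := L2) HB); first last.
- by move=> p /in_t Hp; apply/H2/map_f.
- by move=> p /in_t Hp; apply/H1/map_f.
by apply: eq_bigr => q1 _; apply: eq_bigr => q2 _; rewrite st.
Qed.

Lemma teq3_ptrilinear_sum V W Z U (s t : tens3 V W Z) (B : V -> W -> Z -> U) :
  ptrilinear B -> teq3 s t ->
  \sum_(p <- s) B p.1.1 p.1.2 p.2 = \sum_(p <- t) B p.1.1 p.1.2 p.2.
Proof.
move=> HB st.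
have [L1 H1] := finite_coordinates (map (fun p => p.1.1) (s ++ t)).
have [L2 H2] := finite_coordinates (map (fun p => p.1.2) (s ++ t)).
have [L3 H3] := finite_coordinates (map snd (s ++ t)).
have in_s p : p \in s -> p \in s ++ t by rewrite mem_cat => ->.
have in_t p : p \in t -> p \in s ++ t by rewrite mem_cat orbC => ->.
rewrite (ptrilinear_sum_expand (L1 := L1) (L2 := L2) (L3 := L3) HB); first last.
- by move=> p /in_s Hp; apply/H3/(map_f snd).
- by move=> p /in_s Hp; apply/H2/(map_f (fun p => p.1.2)).
- by move=> p /in_s Hp; apply/H1/(map_f (fun p => p.1.1)).
rewrite (ptrilinear_sum_expand (s := t) (L1 := L1) (L2 := L2) (L3 := L3) HB); first last.
- by move=> p /in_t Hp; apply/H3/(map_f snd).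
- by move=> p /in_t Hp; apply/H2/(map_f (fun p => p.1.2)).
- by move=> p /in_t Hp; apply/H1/(map_f (fun p => p.1.1)).
by apply: eq_bigr => q1 _; apply: eq_bigr => q2 _; apply: eq_bigr => q3 _; rewrite st.
Qed.

Lemma plinear_tsum U V W Z (f : U -> tens V W) (G : V -> W -> Z) :
  tlinear f -> pbilinear G -> plinear (fun u => \sum_(p <- f u) G p.1 p.2).
Proof.
move=> Hf HG k u u'; rewrite (teq_pbilinear_sum HG (Hf k u u')) big_cat big_map /=.
by rewrite scaler_sumr; congr (_ + _); apply: eq_bigr => p _; rewrite (plinearZ (HG.1 _)).
Qed.

Lemma plinear_tsuml U V W Z (T : lmodType K) (f : U -> V -> tens W Z) (G : W -> Z -> T) v :
  tbilinear f -> pbilinear G -> plinear (fun u => \sum_(p <- f u v) G p.1 p.2).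
Proof. by move=> [Hf _] HG; apply: plinear_tsum => // k u u'; apply: Hf. Qed.

Lemma plinear_tsumr U V W Z (T : lmodType K) (f : U -> V -> tens W Z) (G : W -> Z -> T) u :
  tbilinear f -> pbilinear G -> plinear (fun v => \sum_(p <- f u v) G p.1 p.2).
Proof. by move=> [_ Hf] HG; apply: plinear_tsum => // k v v'; apply: Hf. Qed.

End TensorTransport.

Section EntwinedModuleMorphisms.
Variables (K : fieldType) (I : Type) (C : I -> I -> lmodType K)
  (delta : forall X Y Z, C X Z -> tens (C Y Z) (C X Y))
  (eps : forall X, {linear C X X -> K^o}) (A : falgType K)
  (psi : forall X Y, C X Y -> A -> tens A (C X Y)).
Local Notation emod_hom := (emod_hom K I C delta eps A psi).

Lemma emod_hom_comp (M1 M2 M3 : emod K I C delta eps A psi)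
    (h1 : forall X, M1 X -> M2 X) (h2 : forall X, M2 X -> M3 X) :
  emod_hom M1 M2 h1 -> emod_hom M2 M3 h2 -> emod_hom M1 M3 (fun X m => h2 X (h1 X m)).
Proof.
move=> [[h1_linear h1_rho] h1_act] [[h2_linear h2_rho] h2_act].
split=> [|X m a]; last by rewrite h1_act h2_act.
split=> [X|X Y m phi chi]; first exact: plinear_comp.
rewrite h2_rho !big_map.
have pair_h2 := pbilinear_mul (plinear_comp (h2_linear Y) (plinear_linear phi))
                               (plinear_linear chi).
by rewrite (teq_pbilinear_sum pair_h2 (h1_rho X Y m)) big_map.
Qed.

End EntwinedModuleMorphisms.

Section CointegralAverage.
Local Unset Implicit Arguments.
Variables (K : fieldType) (I : Type) (C : I -> I -> lmodType K)
  (delta : forall X Y Z, C X Z -> tens (C Y Z) (C X Y))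
  (eps : forall X, {linear C X X -> K^o}) (A : falgType K)
  (psi : forall X Y, C X Y -> A -> tens A (C X Y))
  (gamma : forall X, 'Hom(A, K^o) -> C X X -> A).
Hypotheses (psi_bilinear : forall X Y, tbilinear (psi X Y))
  (coint : is_normalized_cointegral K I C delta eps A psi gamma).

Local Notation rho := (cm_rho K I C delta eps).
Local Notation rho_linear := (cm_rho_lin K I C delta eps).
Local Notation rho_coassoc := (cm_rho_coassoc K I C delta eps).
Local Notation rho_counit := (cm_rho_counit K I C delta eps).
Local Notation emodule := (emod K I C delta eps A psi).
Local Notation act := (em_act K I C delta eps A psi).
Local Notation act_linearl := (em_act_linl K I C delta eps A psi).
Local Notation act_linearr := (em_act_linr K I C delta eps A psi).
Local Notation act1 := (em_act1 K I C delta eps A psi).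
Local Notation actM := (em_actM K I C delta eps A psi).
Local Notation rho_act := (em_compat K I C delta eps A psi).
Local Notation a_ := (abas K A).
Local Notation a'_ := (adual K A).
Local Notation n := (dimA K A).

Let gamma_linear : forall X phi, plinear (gamma X phi) := coint.2.1.
Let cointegral_coaction := coint.2.2.1.
Let cointegral_action := coint.2.2.2.1.
Let cointegral_unit := coint.2.2.2.2.

Variables (M M' : emodule) (r : forall X, M' X -> M X).
Hypothesis r_comod : comod_hom K I C delta eps M' M r.

Let r_linear X : plinear (r X) := r_comod.1 X.

Definition average_summand X (u : M' X) (c : C X X) : M X :=
  \sum_(j <- enum 'I_n) act M X (r X (act M' X u (a_ j))) (gamma X (a'_ j) c).

Definition average X (m : M' X) : M X :=
  \sum_(p <- rho M' X X m) average_summand X p.1 p.2.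

Lemma average_summand_pbilinear X : pbilinear (average_summand X).
Proof.
split=> [c|u]; apply: plinear_sumf => j k x y.
  by rewrite act_linearl r_linear act_linearl.
by rewrite gamma_linear act_linearr.
Qed.

Lemma average_plinear X : plinear (average X).
Proof. exact: plinear_tsum (rho_linear M' X X) (average_summand_pbilinear X). Qed.

Lemma average_retract (i : forall X, M X -> M' X) :
  emod_hom K I C delta eps A psi M M' i -> (forall X m, r X (i X m) = m) ->
  forall X m, average X (i X m) = m.
Proof.
move=> [[_ i_rho] i_act] ri X m.
rewrite /average (teq_pbilinear_sum (average_summand_pbilinear X) (i_rho X X m)).
rewrite big_map -[RHS](rho_counit M X m); apply: eq_bigr => p _.
rewrite /average_summand; under eq_bigr do rewrite -i_act ri actM.
rewrite -(plinear_sum _ _ _ (act_linearr M X _)) big_enum cointegral_unit.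
by rewrite (plinearZ (act_linearr M X _)) act1.
Qed.

Lemma average_act X (m : M' X) a : average X (act M' X m a) = act M X (average X m) a.
Proof.
rewrite /average (teq_pbilinear_sum (average_summand_pbilinear X) (rho_act M' X X m a)).
rewrite big_allpairs_dep (plinear_sum _ _ _ (act_linearl M X a)); apply: eq_bigr => p _.
rewrite /average_summand (plinear_sum _ _ _ (act_linearl M X a)).
under eq_bigr do under eq_bigr do rewrite actM.
under [RHS]eq_bigr do rewrite actM.
pose G x y := act M X (r X (act M' X p.1 x)) y.
have G_pbilinear : pbilinear G.
  split=> [y|x] k u u'; last by rewrite /G act_linearr.
  by rewrite /G act_linearr r_linear act_linearl.
have := teq_pbilinear_sum G_pbilinear (cointegral_action X p.2 a).
by rewrite big_map big_allpairs_dep.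
Qed.

Section Colinearity.
Variables (X Y : I) (phi : {linear M Y -> K^o}) (chi : {linear C X Y -> K^o}).

Definition pair_rho (m : M X) : K^o := \sum_(p <- rho M X Y m) (phi p.1 : K) * chi p.2.

Lemma pair_rho_plinear : plinear pair_rho.
Proof.
exact: plinear_tsum (rho_linear M X Y) (pbilinear_mul (plinear_linear phi) (plinear_linear chi)).
Qed.

Definition pair_act (x : M Y) (c : C X Y) (b : A) : K^o :=
  \sum_(w <- psi X Y c b) (phi (act M Y x w.1) : K) * chi w.2.

Lemma pair_act_pbilinear b : pbilinear (fun x c => pair_act x c b).
Proof.
split=> [c|x].
  apply: plinear_sumf => w; apply: plinear_mulr.
  exact: plinear_comp (act_linearl M Y w.1) (plinear_linear phi).
exact: plinear_tsuml (psi_bilinear X Y)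
  (pbilinear_mul (plinear_comp (act_linearr M Y x) (plinear_linear phi)) (plinear_linear chi)).
Qed.

Lemma pair_act_plinearr x c : plinear (pair_act x c).
Proof.
exact: plinear_tsumr (psi_bilinear X Y)
  (pbilinear_mul (plinear_comp (act_linearr M Y x) (plinear_linear phi)) (plinear_linear chi)).
Qed.

Lemma pair_rho_act_retract (m : M' X) a b :
  pair_rho (act M X (r X (act M' X m a)) b) =
  \sum_(y <- rho M' X Y m) \sum_(z <- psi X Y y.2 a) pair_act (r Y (act M' Y y.1 z.1)) z.2 b.
Proof.
have [pair_act_l pair_act_m] := pair_act_pbilinear b.
have pair_act_r : pbilinear (fun x c => pair_act (r Y x) c b).
  by split=> [c|x]; [exact: plinear_comp (r_linear Y) (pair_act_l c) | exact: pair_act_m].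
rewrite /pair_rho (teq_pbilinear_sum (pbilinear_mul (plinear_linear phi) (plinear_linear chi))
                           (rho_act M X Y _ b)) big_allpairs_dep.
rewrite (teq_pbilinear_sum (pair_act_pbilinear b) (r_comod.2 X Y _)) big_map.
by rewrite (teq_pbilinear_sum pair_act_r (rho_act M' X Y m a)) big_allpairs_dep.
Qed.

Definition coaction_lhs (u : M' Y) (c : C X Y) (d : C X X) : K^o :=
  \sum_(j <- enum 'I_n) \sum_(z <- psi X Y c (a_ j))
     pair_act (r Y (act M' Y u z.1)) z.2 (gamma X (a'_ j) d).

Definition coaction_rhs (u : M' Y) (c : C Y Y) (d : C X Y) : K^o :=
  \sum_(j <- enum 'I_n) (phi (act M Y (r Y (act M' Y u (a_ j))) (gamma Y (a'_ j) c)) : K) * chi d.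

Definition pair_retract (u : M' Y) (x y : A) (c : C X Y) : K^o :=
  (phi (act M Y (r Y (act M' Y u x)) y) : K) * chi c.

Lemma coaction_lhs_ptrilinear : ptrilinear coaction_lhs.
Proof.
split=> [c d|u d|u c]; apply: plinear_sumf => j.
- apply: plinear_sumf => z; apply: plinear_comp ((pair_act_pbilinear _).1 _).
  exact: plinear_comp (act_linearl M' Y z.1) (r_linear Y).
- apply: (plinear_tsuml (G := fun x c' => pair_act (r Y (act M' Y u x)) c' _)).
    exact: psi_bilinear.
  split=> [c'|x]; last exact: (pair_act_pbilinear _).2.
  apply: plinear_comp ((pair_act_pbilinear _).1 _).
  exact: plinear_comp (act_linearr M' Y u) (r_linear Y).
- apply: plinear_sumf => z; apply: plinear_comp (pair_act_plinearr _ _).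
  exact: gamma_linear.
Qed.

Lemma coaction_rhs_ptrilinear : ptrilinear coaction_rhs.
Proof.
split=> [c d|u d|u c]; apply: plinear_sumf => j; last first.
  by apply: plinear_mull; exact: plinear_linear.
all: apply: plinear_mulr => k x y; rewrite -linearP.
  by rewrite gamma_linear act_linearr.
by rewrite act_linearl r_linear act_linearl.
Qed.

Lemma pair_retract_ptrilinear u : ptrilinear (pair_retract u).
Proof.
split=> [y c|x c|x y]; last by apply: plinear_mull; exact: plinear_linear.
all: apply: plinear_mulr => k a b; rewrite -linearP.
  by rewrite act_linearr r_linear act_linearl.
by rewrite act_linearr.
Qed.

(* Axiom (1) of the cointegral, paired against [phi (x) chi]. *)
Lemma sum_coaction_lhs (u : M' Y) (f : C X Y) :
  \sum_(q <- delta X X Y f) coaction_lhs u q.1 q.2 =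
  \sum_(q <- delta X Y Y f) coaction_rhs u q.1 q.2.
Proof.
have := teq3_ptrilinear_sum (pair_retract_ptrilinear u) (cointegral_coaction X Y f).
rewrite big_flatten big_map /= big_allpairs_dep /= exchange_big /=.
under eq_bigr do rewrite big_flatten big_map /=.
under eq_bigr do under eq_bigr do rewrite big_allpairs_dep /=.
by [].
Qed.

Lemma average_pair_rho (m : M' X) :
  pair_rho (average X m) = \sum_(p <- rho M' X Y m) (phi (average Y p.1) : K) * chi p.2.
Proof.
rewrite /average (plinear_sum _ _ _ pair_rho_plinear).
under eq_bigr do rewrite /average_summand (plinear_sum _ _ _ pair_rho_plinear).
under eq_bigr do under eq_bigr do rewrite pair_rho_act_retract.
under eq_bigr do rewrite exchange_big /=.
transitivity (\sum_(t <- [seq (q.1, q.2, p.2) | p <- rho M' X X m, q <- rho M' X Y p.1])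
                coaction_lhs t.1.1 t.1.2 t.2).
  by rewrite big_allpairs_dep.
rewrite (teq3_ptrilinear_sum coaction_lhs_ptrilinear (rho_coassoc M' X X Y m)).
rewrite big_allpairs_dep /=.
under eq_bigr do rewrite sum_coaction_lhs.
transitivity (\sum_(t <- [seq (p.1, q.1, q.2) | p <- rho M' X Y m, q <- delta X Y Y p.2])
                coaction_rhs t.1.1 t.1.2 t.2).
  by rewrite big_allpairs_dep.
rewrite -(teq3_ptrilinear_sum coaction_rhs_ptrilinear (rho_coassoc M' X Y Y m)).
rewrite big_allpairs_dep; apply: eq_bigr => p _.
rewrite /average linear_sum mulr_suml; apply: eq_bigr => q _.
by rewrite /average_summand /coaction_rhs linear_sum mulr_suml.
Qed.

End Colinearity.

Lemma average_emod_hom : emod_hom K I C delta eps A psi M' M average.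
Proof.
split; last exact: average_act.
split=> [|X Y m phi chi]; first exact: average_plinear.
by rewrite big_map; exact: average_pair_rho.
Qed.

End CointegralAverage.

Theorem theorem7p8 (K : fieldType) (I : Type) (C : I -> I -> lmodType K)
    (delta : forall X Y Z, C X Z -> tens (C Y Z) (C X Y))
    (eps : forall X, {linear C X X -> K^o})
    (A : falgType K) (psi : forall X Y, C X Y -> A -> tens A (C X Y)) :
  is_coalgebra K I C delta eps ->
  is_entwining K I C delta eps A psi ->
  (exists gamma : forall X, 'Hom(A, K^o) -> C X X -> A,
      is_normalized_cointegral K I C delta eps A psi gamma) ->
  Gpsi_semisimple K I C delta eps A psi /\ Gpsi_Maschke K I C delta eps A psi.
Proof.
move=> _ [psi_bilinear _] [gamma coint]; split.
- move=> M1 M2 M3 f g f_hom _ _ [r [r_comod rf]].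
  exists (average K I C delta eps A psi gamma M1 M2 r); split; first exact: average_emod_hom.
  exact: average_retract f_hom rf.
- move=> M M' N i f i_hom f_hom [r [r_comod ri]].
  exists (fun X m => f X (average K I C delta eps A psi gamma M M' r X m)); split.
    by apply: emod_hom_comp f_hom; exact: average_emod_hom.
  by move=> X m; rewrite average_retract.
Qed.
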